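(* Let $\mathcal T$ be a text, let $\alpha$ be right-maximal in $\mathcal T$, and let $\mathtt{st\text{-}lex}[b,e]$ be the range containing the text positions $i\in\mathtt{st\text{-}lex}$ such that $\mathcal T[1,i]$ is suffixed by $\alpha$. Let $C=\{c\in\Sigma: \alpha\cdot c\text{ occurs in }\mathcal T\}$. Then: (a) for $c\in C\setminus\{\min C\}$, if $\mathcal T[j-|\alpha|+1,n]$ is the lexicographically smallest suffix prefixed by $\alpha\cdot c=\mathcal T[j-|\alpha|+1,j+1]$, then $j\in\mathtt{st\text{-}lex}[b,e]$; (b) for $c\in C\setminus\{\max C\}$, if $\mathcal T[j-|\alpha|+1,n]$ is the lexicographically largest suffix prefixed by $\alpha\cdot c=\mathcal T[j-|\alpha|+1,j+1]$, then $j\in\mathtt{st\text{-}lex}[b,e]$.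
   Context: A text is a string $\mathcal T\in\Sigma^n$ over an integer alphabet whose last symbol $\mathcal T[n]=\$$ occurs only there and is smallest. A substring $\alpha$ is right-maximal if it is a suffix of $\mathcal T$ or there exist distinct $a,b$ with $\alpha a$, $\alpha b$ substrings of $\mathcal T$. $\mathrm{ISA}[i]$ is the lexicographic rank of suffix $\mathcal T[i,n]$. For $i\ne j$, $\mathrm{rlce}(i,j)$ is the length of the longest common prefix of $\mathcal T[i,n]$ and $\mathcal T[j,n]$. For a permutation $\pi$, $\mathrm{LPF}_\pi[i]=0$ if $\pi(i)=1$, else $\mathrm{LPF}_\pi[i]=\max_{\pi(j)<\pi(i)}\mathrm{rlce}(j,i)$, and $\mathrm{PDA}_\pi=\{i+\mathrm{LPF}_\pi[i]:i\in[n]\}$. Let $\mathtt{st\text{-}lex}^-=\mathrm{PDA}_\pi$ for $\pi(i)=\mathrm{ISA}[i]$ and $\mathtt{st\text{-}lex}^+=\mathrm{PDA}_{\bar\pi}$ for $\bar\pi(i)=n-\mathrm{ISA}[i]+1$. The array $\mathtt{st\text{-}lex}$ lists the set $\{i-1: i\in\mathtt{st\text{-}lex}^-\cup\mathtt{st\text{-}lex}^+\cup\{n+1\}\}$ sorted colexicographically by the prefixes $\mathcal T[1,j]$ ($\mathcal T[1,0]$ being empty). *)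

(* Texts are sequences of naturals (integer alphabet).
   Text positions are 1-based as in the paper: T[i] = nth 0 T i.-1. *)
From mathcomp Require Import all_boot.
Set Implicit Arguments. Unset Strict Implicit. Unset Printing Implicit Defensive.

(* T is a text: nonempty, last symbol ($) strictly smaller than every other
   symbol (hence occurs only there and is smallest). *)
Definition is_text (T : seq nat) : bool :=
  (0 < size T) &&
  all (fun i => nth 0 T (size T).-1 < nth 0 T i) (iota 0 (size T).-1).

Fixpoint lex_lt (s t : seq nat) : bool :=
  match s, t with
  | [::], _ :: _ => true
  | _, [::] => false
  | x :: s', y :: t' => (x < y) || ((x == y) && lex_lt s' t')
  end.

Fixpoint lcp (s t : seq nat) : nat :=
  match s, t with
  | x :: s', y :: t' => if x == y then (lcp s' t').+1 else 0
  | _, _ => 0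
  end.

Definition suf (T : seq nat) (i : nat) : seq nat := drop i.-1 T.

Definition ISA (T : seq nat) (i : nat) : nat :=
  (count (fun j => lex_lt (suf T j) (suf T i)) (iota 1 (size T))).+1.

Definition rlce (T : seq nat) (i j : nat) : nat := lcp (suf T i) (suf T j).

Definition LPF (T : seq nat) (pi : nat -> nat) (i : nat) : nat :=
  if pi i == 1 then 0
  else \max_(j <- iota 1 (size T) | pi j < pi i) rlce T j i.

Definition PDA (T : seq nat) (pi : nat -> nat) (p : nat) : bool :=
  has (fun i => p == i + LPF T pi i) (iota 1 (size T)).

Definition stlex_minus (T : seq nat) : nat -> bool := PDA T (ISA T).
Definition stlex_plus (T : seq nat) : nat -> bool :=
  PDA T (fun i => size T - ISA T i + 1).

(* membership in the set underlying the array st-lex: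
   { i-1 : i in st-lex^- U st-lex^+ U {n+1} } *)
Definition in_stlex (T : seq nat) (p : nat) : bool :=
  [|| stlex_minus T p.+1, stlex_plus T p.+1 | p.+1 == (size T).+1].

(* the range st-lex[b,e]: entries i of st-lex such that T[1,i] is suffixed
   by alpha (these are contiguous in the colexicographic order) *)
Definition stlex_range (T alpha : seq nat) (p : nat) : bool :=
  in_stlex T p && suffix alpha (take p T).

Definition right_maximal (T alpha : seq nat) : Prop :=
  suffix alpha T \/
  exists a b, a <> b /\ infix (rcons alpha a) T /\ infix (rcons alpha b) T.

Definition inC (T alpha : seq nat) (c : nat) : bool := infix (rcons alpha c) T.

From mathcomp Require Import all_boot.
From mathcomp Require Import zify.
Set Implicit Arguments. Unset Strict Implicit.

(* Let i = j - |alpha| + 1, so that T[i,n] is the extremal suffix prefixed by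
   alpha.c. A suffix prefixed by alpha.c' with c' on the other side of c comes
   before T[i,n] in the pi-order and shares exactly alpha with it, whereas any
   suffix sharing more than alpha with T[i,n] is prefixed by alpha.c, hence
   comes after T[i,n] by extremality. So LPF_pi[i] = |alpha|, and
   i + |alpha| = j + 1 lies in PDA_pi, for pi = ISA in (a) and the reversed
   rank in (b). *)

Lemma lex_lt_irr s : ~~ lex_lt s s.
Proof. by elim: s => //= x s IH; rewrite ltnn eqxx IH. Qed.

Lemma lex_lt_trans s t u : lex_lt s t -> lex_lt t u -> lex_lt s u.
Proof.
elim: s t u => [|x s IH] [|y t] [|z u] //=.
case/orP=> [lt_xy|/andP[/eqP-> lt_st]]; case/orP=> [lt_yz|/andP[/eqP<- lt_tu]].
- by rewrite (ltn_trans lt_xy lt_yz).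
- by rewrite lt_xy.
- by rewrite lt_yz.
- by rewrite eqxx (IH _ _ lt_st lt_tu) orbT.
Qed.

Lemma lex_lt_cat_cons a x y s t : x < y -> lex_lt (a ++ x :: s) (a ++ y :: t).
Proof. by move=> lt_xy; elim: a => [|z a IH] /=; rewrite ?lt_xy ?eqxx ?IH ?orbT. Qed.

Lemma lcp_cat_cons a x y s t : x != y -> lcp (a ++ x :: s) (a ++ y :: t) = size a.
Proof. by move=> neq_xy; elim: a => [|z a IH] /=; rewrite ?(negbTE neq_xy) ?eqxx ?IH. Qed.

Lemma eq_take_lcp m s t : m <= lcp s t -> take m s = take m t.
Proof.
elim: s t m => [|x s IH] [|y t] [|m] //=.
by case: eqP => // -> le_m; rewrite (IH t m le_m).
Qed.

Lemma suf_inj T : {in iota 1 (size T) &, injective (suf T)}.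
Proof.
move=> a b; rewrite !mem_iota => /andP[a_ge1 a_le] /andP[b_ge1 b_le] /(congr1 size).
rewrite !size_drop; lia.
Qed.

Lemma lex_lt_ISA T a b :
  a \in iota 1 (size T) -> lex_lt (suf T a) (suf T b) -> ISA T a < ISA T b.
Proof.
move=> Ta lt_ab; rewrite /ISA ltnS.
set P := fun j => lex_lt (suf T j) (suf T a).
have <- : count (predU P (pred1 a)) (iota 1 (size T)) = (count P (iota 1 (size T))).+1.
  have disj : count (predI P (pred1 a)) (iota 1 (size T)) = 0.
    apply/eqP; rewrite -leqn0 leqNgt -has_count.
    apply/hasP => -[x _ /andP[Px /eqP eq_xa]].
    by move: Px; rewrite /P eq_xa (negbTE (lex_lt_irr _)).
  have one_a : count (pred1 a) (iota 1 (size T)) = 1.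
    by rewrite (count_uniq_mem _ (iota_uniq _ _)) Ta.
  by have := count_predUI P (pred1 a) (iota 1 (size T)); rewrite disj one_a; lia.
by apply: sub_count => x /orP[Px|/eqP->] //; apply: lex_lt_trans Px lt_ab.
Qed.

Lemma ISA_le_size T a : a \in iota 1 (size T) -> ISA T a <= size T.
Proof.
move=> Ta; rewrite /ISA.
set P := fun j => lex_lt (suf T j) (suf T a).
have := count_predC P (iota 1 (size T)); rewrite size_iota.
have : 0 < count (predC P) (iota 1 (size T)).
  by rewrite -has_count; apply/hasP; exists a; rewrite //= /P lex_lt_irr.
lia.
Qed.

Section ExtremalOccurrence.

Variables (T alpha : seq nat) (pi : nat -> nat) (before : rel (seq nat)).
Hypothesis pi_gt0 : forall a, 0 < pi a.
Hypothesis pi_mono :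
  {in iota 1 (size T) &, forall a b, before (suf T a) (suf T b) -> pi a < pi b}.

Lemma LPF_extremal_occurrence c c' i k s s' :
  i \in iota 1 (size T) -> k \in iota 1 (size T) ->
  suf T i = alpha ++ c :: s -> suf T k = alpha ++ c' :: s' -> c' != c ->
  before (suf T k) (suf T i) ->
  (forall j, 1 <= j <= size T -> prefix (rcons alpha c) (suf T j) ->
     suf T i = suf T j \/ before (suf T i) (suf T j)) ->
  LPF T pi i = size alpha.
Proof.
move=> Ti Tk suf_i suf_k neq_c before_ki extremal_i.
have lt_ki := pi_mono Tk Ti before_ki.
rewrite /LPF ifN; last by apply/eqP=> pi_i1; have := pi_gt0 k; lia.
apply/eqP; rewrite eqn_leq; apply/andP; split.
  apply/bigmax_leqP_seq => j Tj lt_ji; rewrite leqNgt; apply/negP => long_lcp.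
  have pref_j : prefix (rcons alpha c) (suf T j).
    rewrite prefixE size_rcons (eq_take_lcp long_lcp) suf_i -cat_rcons.
    by rewrite -(size_rcons alpha c) take_size_cat.
  have := Tj; rewrite mem_iota => /andP[j_ge1 j_le].
  case: (extremal_i j ltac:(lia) pref_j) => [/(suf_inj Ti Tj) eq_ij|before_ij].
    by rewrite eq_ij ltnn in lt_ji.
  by have := pi_mono Ti Tj before_ij; lia.
have -> : size alpha = rlce T k i by rewrite /rlce suf_i suf_k lcp_cat_cons.
exact: leq_bigmax_seq.
Qed.

Lemma PDA_extremal_occurrence c c' j :
  inC T alpha c' -> c' != c ->
  (forall s s', before (alpha ++ c' :: s') (alpha ++ c :: s)) ->
  size alpha <= j -> j < size T ->
  take (size alpha).+1 (suf T (j - size alpha + 1)) = rcons alpha c ->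
  (forall k, 1 <= k <= size T -> prefix (rcons alpha c) (suf T k) ->
     suf T (j - size alpha + 1) = suf T k \/
     before (suf T (j - size alpha + 1)) (suf T k)) ->
  PDA T pi j.+1.
Proof.
move=> /infixP[u [u' T_eq]] neq_c before_c' alpha_le j_lt take_i extremal_i.
set i := j - size alpha + 1 in take_i extremal_i.
have suf_i : suf T i = alpha ++ c :: drop (size alpha).+1 (suf T i).
  by rewrite -cat_rcons -take_i cat_take_drop.
have suf_k : suf T (size u).+1 = alpha ++ c' :: u'.
  by rewrite /suf T_eq drop_size_cat // cat_rcons.
have Ti : i \in iota 1 (size T) by rewrite mem_iota /i; lia.
have Tk : (size u).+1 \in iota 1 (size T).
  by rewrite mem_iota T_eq !size_cat size_rcons add1n addSn addnS !ltnS leq0n leq_addr.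
apply/hasP; exists i => //.
rewrite (LPF_extremal_occurrence Ti Tk suf_i suf_k neq_c) //; last first.
  by rewrite suf_i suf_k before_c'.
by rewrite /i; apply/eqP; lia.
Qed.

End ExtremalOccurrence.

Lemma suffix_take_occurrence T alpha c j : size alpha <= j ->
  take (size alpha).+1 (suf T (j - size alpha + 1)) = rcons alpha c ->
  suffix alpha (take j T).
Proof.
move=> alpha_le take_eq.
have -> : j = (j - size alpha) + size alpha by lia.
rewrite takeD -[drop _ T]/(suf T (j - size alpha).+1) -addn1.
rewrite -(cat_take_drop (size alpha).+1 (suf T _)) take_eq -cats1 -catA.
by rewrite take_size_cat // suffix_suffix.
Qed.

Theorem corollary26 (T alpha : seq nat) :
  is_text T -> right_maximal T alpha ->
  (* (a) *)
  (forall (c j : nat),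
     inC T alpha c -> (exists c', inC T alpha c' /\ c' < c) ->
     size alpha <= j -> j.+1 <= size T ->
     take (size alpha).+1 (suf T (j - size alpha + 1)) = rcons alpha c ->
     (forall k, 1 <= k <= size T ->
        prefix (rcons alpha c) (suf T k) ->
        suf T (j - size alpha + 1) = suf T k \/
        lex_lt (suf T (j - size alpha + 1)) (suf T k)) ->
     stlex_range T alpha j) /\
  (* (b) *)
  (forall (c j : nat),
     inC T alpha c -> (exists c', inC T alpha c' /\ c < c') ->
     size alpha <= j -> j.+1 <= size T ->
     take (size alpha).+1 (suf T (j - size alpha + 1)) = rcons alpha c ->
     (forall k, 1 <= k <= size T ->
        prefix (rcons alpha c) (suf T k) ->
        suf T (j - size alpha + 1) = suf T k \/
        lex_lt (suf T k) (suf T (j - size alpha + 1))) ->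
     stlex_range T alpha j).
Proof.
(* The witness c' makes both the text property and right-maximality redundant. *)
move=> _ _; split=> c j _ [c' [Cc' cmp_c]] alpha_le j_lt take_eq extremal;
  rewrite /stlex_range (suffix_take_occurrence alpha_le take_eq) andbT;
  apply/or3P.
- constructor 1; apply: (PDA_extremal_occurrence (before := lex_lt)) Cc' _ _
    alpha_le j_lt take_eq extremal => //.
  + by move=> a b Ta _; apply: lex_lt_ISA.
  + by rewrite neq_ltn cmp_c.
  + by move=> s s'; apply: lex_lt_cat_cons.
- constructor 2; apply: (PDA_extremal_occurrence (before := fun s t => lex_lt t s))
    Cc' _ _ alpha_le j_lt take_eq extremal => //.
  + by move=> a; rewrite addn1.
  + move=> a b Ta Tb /(lex_lt_ISA Tb).
    by have := ISA_le_size Ta; have := ISA_le_size Tb; lia.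
  + by rewrite neq_ltn cmp_c orbT.
  + by move=> s s'; apply: lex_lt_cat_cons.
Qed.
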